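(* Let $M,\Xi\in\mathbb{R}^{\ell\times\ell}$ be symmetric positive semidefinite, suppose $\operatorname{range}(M)=\mathbb{R}^J:=\operatorname{span}\{e_i:i\in J\}$ for some $J\subseteq\{1,\dots,\ell\}$, $\|\Xi\|_{op}\le\lambda_{\min}(M_{(J)})/2$, and $M+\Xi$ is invertible. Then for $x\in\operatorname{range}(M)$, \[ \big|x^\top(M+\Xi)^{-1}x-x_{(J)}^\top M_{(J)}^{-1}x_{(J)}\big|\le2\|M_{(J)}^{-1}\|_{op}^2\,\|\Xi\|_{op}\,\|x\|^2, \] while for $x\notin\operatorname{range}(M)$, \[ x^\top(M+\Xi)^{-1}x\ge\frac{1}{2\|\Xi\|_{op}}\|x_{(J^c)}\|^2 . \]
   Context: For a vector $x$ and index set $J$, $x_{(J)}$ is the restriction of $x$ to the coordinates in $J$; for a matrix $M$, $M_{(J)}$ is the principal submatrix on $J\times J$; $J^c$ is the complement of $J$; $\lambda_{\min}$ denotes the smallest eigenvalue. *)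

From HB Require Import structures.
From mathcomp Require Import all_boot all_order all_algebra.
From mathcomp Require Import all_classical all_reals.
Set Implicit Arguments. Unset Strict Implicit. Unset Printing Implicit Defensive.
Import Order.TTheory GRing.Theory Num.Theory.
Local Open Scope ring_scope.
Local Open Scope classical_set_scope.

Definition vnorm (R : realType) (n : nat) (x : 'cV[R]_n) : R :=
  Num.sqrt (\sum_(i < n) x i 0 ^+ 2).

Definition opnorm (R : realType) (m n : nat) (A : 'M[R]_(m, n)) : R :=
  sup [set vnorm (A *m x) | x in [set x : 'cV[R]_n | vnorm x = 1]].

Definition lambda_min (R : realType) (n : nat) (A : 'M[R]_n) : R :=
  inf [set a : R | eigenvalue A a].

Definition symmetric (R : realType) (n : nat) (A : 'M[R]_n) : Prop := A^T = A.

Definition psd (R : realType) (n : nat) (A : 'M[R]_n) : Prop :=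
  symmetric A /\ forall x : 'cV[R]_n, 0 <= (x^T *m A *m x) 0 0.

Definition in_range (R : realType) (m n : nat) (A : 'M[R]_(m, n)) (x : 'cV[R]_m) : Prop :=
  exists y : 'cV[R]_n, x = A *m y.

Definition in_coord_span (R : realType) (n : nat) (J : {set 'I_n}) (x : 'cV[R]_n) : Prop :=
  forall i, i \notin J -> x i 0 = 0.

(* Restriction x_(J) of a vector to the coordinates in J (in increasing order). *)
Definition vrestr (R : realType) (n : nat) (J : {set 'I_n}) (x : 'cV[R]_n) : 'cV[R]_#|J| :=
  \col_(i < #|J|) x (enum_val i) 0.

Definition msub (R : realType) (n : nat) (J : {set 'I_n}) (M : 'M[R]_n) : 'M[R]_#|J| :=
  \matrix_(i < #|J|, j < #|J|) M (enum_val i) (enum_val j).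

Definition qform (R : realType) (n : nat) (A : 'M[R]_n) (x : 'cV[R]_n) : R :=
  (x^T *m A *m x) 0 0.

From Pilot Require Import Defs.
From HB Require Import structures.
From mathcomp Require Import all_boot all_order all_algebra.
From mathcomp Require Import all_classical all_reals.
From mathcomp Require Import lra ring.
Import Order.TTheory GRing.Theory Num.Theory.
Set Implicit Arguments. Unset Strict Implicit. Unset Printing Implicit Defensive.
Local Open Scope ring_scope.

(* For a positive semidefinite invertible P, x^T P^-1 x is the maximum over y of
   2 x.y - y^T P y, attained at y = P^-1 x.  If x = M w, testing y = w gives the
   lower bound w^T M w - w^T Xi w for x^T (M + Xi)^-1 x, while dropping Xi and
   using 2 (M w).y - y^T M y <= w^T M w gives the upper bound w^T M w; choosing w
   supported on J makes w^T M w = x_(J)^T M_(J)^-1 x_(J).  For a general x, its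
   part z off J satisfies M z = 0, and testing y = z / ||Xi|| gives the lower
   bound ||z||^2 / ||Xi||. *)

Section Euclidean.
Variable R : realType.
Implicit Types (n : nat) (c : R).

Definition dot n (x y : 'cV[R]_n) : R := (x^T *m y) 0 0.

Lemma dotC n (x y : 'cV[R]_n) : dot x y = dot y x.
Proof. by rewrite /dot -{1}(trmxK y) -trmx_mul mxE. Qed.

Lemma dotE n (x y : 'cV[R]_n) : dot x y = \sum_i x i 0 * y i 0.
Proof. by rewrite /dot mxE; apply: eq_bigr => i _; rewrite mxE. Qed.

Lemma dotBl n (x y z : 'cV[R]_n) : dot (y - z) x = dot y x - dot z x.
Proof. by rewrite /dot linearB /= mulmxBl !mxE. Qed.

Lemma dotBr n (x y z : 'cV[R]_n) : dot x (y - z) = dot x y - dot x z.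
Proof. by rewrite /dot mulmxBr !mxE. Qed.

Lemma dotZr n (x y : 'cV[R]_n) c : dot x (c *: y) = c * dot x y.
Proof. by rewrite /dot -scalemxAr mxE. Qed.

Lemma dot0r n (x : 'cV[R]_n) : dot x 0 = 0.
Proof. by rewrite /dot mulmx0 mxE. Qed.

Lemma dot_mulmxr m n (A : 'M[R]_(m, n)) x y : dot x (A *m y) = dot (A^T *m x) y.
Proof. by rewrite /dot trmx_mul trmxK mulmxA. Qed.

Lemma dotxx_eq0 n (x : 'cV[R]_n) : dot x x = 0 -> x = 0.
Proof.
rewrite dotE => /psumr_eq0P x0; apply/matrixP => i j; rewrite (ord1 j) mxE.
have /eqP : x i 0 * x i 0 = 0 by apply: x0 => // k _; rewrite -expr2 sqr_ge0.
by rewrite -expr2 sqrf_eq0 => /eqP.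
Qed.

Lemma vnorm_ge0 n (x : 'cV[R]_n) : 0 <= vnorm x.
Proof. exact: sqrtr_ge0. Qed.

Lemma vnorm0 n : vnorm (0 : 'cV[R]_n) = 0.
Proof. by rewrite /vnorm big1 ?sqrtr0 // => i _; rewrite mxE expr0n. Qed.

Lemma vnorm_sqr n (x : 'cV[R]_n) : vnorm x ^+ 2 = dot x x.
Proof.
rewrite sqr_sqrtr ?dotE; first by apply: eq_bigr => i _; rewrite expr2.
by apply: sumr_ge0 => i _; apply: sqr_ge0.
Qed.

Lemma vnormE n (x : 'cV[R]_n) : vnorm x = Num.sqrt (dot x x).
Proof. by rewrite /vnorm dotE; congr Num.sqrt; apply: eq_bigr => i _; rewrite expr2. Qed.

Lemma vnormZ n c (x : 'cV[R]_n) : vnorm (c *: x) = `|c| * vnorm x.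
Proof.
apply/eqP; rewrite -(eqrXn2 (_ : 0 < 2)%N) ?mulr_ge0 ?vnorm_ge0 //.
rewrite exprMn !vnorm_sqr dotZr dotC dotZr /dot.
by rewrite real_normK ?num_real // mulrA -expr2.
Qed.

Lemma CauchySchwarz_sum n (f g : 'I_n -> R) :
  (\sum_i f i * g i) ^+ 2 <= (\sum_i f i ^+ 2) * (\sum_i g i ^+ 2).
Proof.
set a := \sum_i f i ^+ 2; set b := \sum_i g i ^+ 2; set c := \sum_i f i * g i.
have a_ge0 : 0 <= a by apply: sumr_ge0 => i _; apply: sqr_ge0.
(* Lagrange: the sum of the squares (a g_i - c f_i)^2 is a (a b - c^2). *)
have : 0 <= a * (a * b - c ^+ 2).
  have -> : a * (a * b - c ^+ 2) = \sum_i (a * g i - c * f i) ^+ 2.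
    rewrite (eq_bigr (fun i => a ^+ 2 * g i ^+ 2 - 2 * a * c * (f i * g i)
                               + c ^+ 2 * f i ^+ 2)) => [|i _]; last by ring.
    by rewrite !big_split /= sumrN -!mulr_sumr -/a -/b -/c; ring.
  by apply: sumr_ge0 => i _; apply: sqr_ge0.
have [a0|a_neq0] := eqVneq a 0; last by rewrite pmulr_rge0 ?subr_ge0 // lt_def a_neq0.
have f0 i : f i = 0.
  move/eqP: a0; rewrite psumr_eq0 => [/allP/(_ i (mem_index_enum _))|j _].
    by rewrite sqrf_eq0 => /eqP.
  exact: sqr_ge0.
have -> : c = 0 by rewrite /c big1 // => i _; rewrite f0 mul0r.
by rewrite a0 !mul0r expr0n.
Qed.

Lemma dot_le_vnorm n (x y : 'cV[R]_n) : dot x y <= vnorm x * vnorm y.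
Proof.
apply: le_trans (ler_norm _) _; rewrite -sqrtrM ?sumr_ge0 // => [|i _].
  by rewrite -sqrtr_sqr dotE ler_wsqrtr // CauchySchwarz_sum.
exact: sqr_ge0.
Qed.

End Euclidean.

Section OperatorNorm.
Variable R : realType.

Lemma opnorm_has_ub m n (A : 'M[R]_(m, n)) :
  has_ubound [set vnorm (A *m x) | x in [set x : 'cV[R]_n | vnorm x = 1]].
Proof.
exists (Num.sqrt (\sum_i \sum_j A i j ^+ 2)) => _ [x /= x1 <-].
have x_sqr : \sum_j x j 0 ^+ 2 = 1.
  move/(congr1 (fun t => t ^+ 2)): x1; rewrite expr1n sqr_sqrtr //.
  by apply: sumr_ge0 => j _; apply: sqr_ge0.
apply: ler_wsqrtr; apply: ler_sum => i _.
by rewrite mxE -[X in _ <= X]mulr1 -x_sqr CauchySchwarz_sum.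
Qed.

Lemma opnorm_ge0 m n (A : 'M[R]_(m, n)) : 0 <= opnorm A.
Proof.
have [[x x1]|no_unit] := pselect (exists x : 'cV[R]_n, vnorm x = 1).
  apply: le_trans (vnorm_ge0 (A *m x)) _.
  by apply: ub_le_sup; [exact: opnorm_has_ub | exists x].
rewrite /opnorm (_ : image _ _ = set0) ?sup0 //.
by apply/seteqP; split => // r [x x1 _]; apply: no_unit; exists x.
Qed.

Lemma vnorm_mulmx_le m n (A : 'M[R]_(m, n)) x : vnorm (A *m x) <= opnorm A * vnorm x.
Proof.
have [x0|x_neq0] := eqVneq (vnorm x) 0.
  have -> : x = 0 by apply: dotxx_eq0; rewrite -vnorm_sqr x0 expr0n.
  by rewrite mulmx0 vnorm0 mulr_ge0 ?opnorm_ge0 ?vnorm_ge0.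
have x_gt0 : 0 < vnorm x by rewrite lt_def x_neq0 vnorm_ge0.
rewrite mulrC -ler_pdivrMl // -[_^-1]ger0_norm ?invr_ge0 ?vnorm_ge0 //.
rewrite -vnormZ scalemxAr; apply: ub_le_sup; first exact: opnorm_has_ub.
exists ((vnorm x)^-1 *: x) => //=.
by rewrite vnormZ ger0_norm ?invr_ge0 ?vnorm_ge0 // mulVf.
Qed.

Lemma qform_le_opnorm n (A : 'M[R]_n) x : qform A x <= opnorm A * vnorm x ^+ 2.
Proof.
rewrite /qform -mulmxA -/(dot _ _); apply: le_trans (dot_le_vnorm _ _) _.
rewrite mulrC expr2 mulrA ler_wpM2r ?vnorm_ge0 //; exact: vnorm_mulmx_le.
Qed.

End OperatorNorm.

Section VariationalInverse.
Variable R : realType.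
Implicit Types (n : nat) (c : R).

Lemma qformE n (A : 'M[R]_n) x : qform A x = dot x (A *m x).
Proof. by rewrite /qform /dot mulmxA. Qed.

Lemma qformD n (A B : 'M[R]_n) x : qform (A + B) x = qform A x + qform B x.
Proof. by rewrite /qform mulmxDr mulmxDl mxE. Qed.

Lemma qformZ n (A : 'M[R]_n) c x : qform A (c *: x) = c ^+ 2 * qform A x.
Proof. by rewrite !qformE -scalemxAr dotZr dotC dotZr dotC mulrA -expr2. Qed.

Lemma psd_add n (A B : 'M[R]_n) : psd A -> psd B -> psd (A + B).
Proof.
move=> [symA A_ge0] [symB B_ge0]; split => [|x].
  by rewrite /Defs.symmetric linearD /= symA symB.
change (0 <= qform (A + B) x); rewrite qformD; exact: addr_ge0 (A_ge0 x) (B_ge0 x).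
Qed.

Lemma psd_dot_le n (S : 'M[R]_n) u y : psd S ->
  2 * dot u (S *m y) - qform S y <= qform S u.
Proof.
move=> [symS S_ge0]; have : 0 <= qform S (u - y) := S_ge0 (u - y).
rewrite qformE mulmxBr !dotBl !dotBr -!qformE dot_mulmxr symS.
rewrite [dot y _]dotC; lra.
Qed.

Lemma qform_mulmx_invmx n (P : 'M[R]_n) x : P \in unitmx ->
  qform P (invmx P *m x) = qform (invmx P) x.
Proof. by move=> Pu; rewrite qformE mulmxA mulmxV // mul1mx dotC -qformE. Qed.

Lemma qform_invmx_ge n (P : 'M[R]_n) x y : psd P -> P \in unitmx ->
  2 * dot x y - qform P y <= qform (invmx P) x.
Proof.
move=> Ppsd Pu; rewrite -qform_mulmx_invmx //.
have := psd_dot_le (invmx P *m x) y Ppsd.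
by rewrite dot_mulmxr (proj1 Ppsd) mulmxA mulmxV // mul1mx.
Qed.

Lemma qform_invmx_eq n (P : 'M[R]_n) x : P \in unitmx ->
  qform (invmx P) x = 2 * dot x (invmx P *m x) - qform P (invmx P *m x).
Proof. by move=> Pu; rewrite qform_mulmx_invmx // -qformE; lra. Qed.

Section Perturbation.
Variables (n : nat) (M Xi : 'M[R]_n).
Hypotheses (Mpsd : psd M) (Xipsd : psd Xi) (MXiu : M + Xi \in unitmx).

Lemma qform_invmx_perturb w :
  qform M w - qform Xi w <= qform (invmx (M + Xi)) (M *m w) <= qform M w.
Proof.
have MXipsd := psd_add Mpsd Xipsd.
apply/andP; split.
  have := qform_invmx_ge (M *m w) w MXipsd MXiu.
  by rewrite qformD dotC -qformE; lra.
rewrite qform_invmx_eq // qformD.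
set y := invmx (M + Xi) *m (M *m w).
have := psd_dot_le w y Mpsd; have := proj2 Xipsd y.
by rewrite dot_mulmxr (proj1 Mpsd) -/(qform Xi y); lra.
Qed.

Lemma qform_invmx_ker_ge x z : M *m z = 0 ->
  (2 * dot x z - dot z z) / opnorm Xi <= qform (invmx (M + Xi)) x.
Proof.
move=> Mz0; have MXipsd := psd_add Mpsd Xipsd.
have [c0|c_neq0] := eqVneq (opnorm Xi) 0.
  have := qform_invmx_ge x 0 MXipsd MXiu.
  by rewrite c0 invr0 mulr0 dot0r /qform mulmx0 mxE; lra.
set c := opnorm Xi; have c_gt0 : 0 < c by rewrite lt_def c_neq0 opnorm_ge0.
have := qform_invmx_ge x (c^-1 *: z) MXipsd MXiu.
apply: le_trans; rewrite dotZr qformZ qformD qformE Mz0 dot0r add0r.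
have Xiz : qform Xi z <= c * dot z z by rewrite -vnorm_sqr qform_le_opnorm.
have -> : (2 * dot x z - dot z z) / c = 2 * c^-1 * dot x z - c^-1 ^+ 2 * (c * dot z z).
  by field; rewrite c_neq0.
have := ler_wpM2l (sqr_ge0 c^-1) Xiz; lra.
Qed.

End Perturbation.
End VariationalInverse.

Section Coordinates.
Variable R : realType.

Definition coord_embed n (J : {set 'I_n}) : 'M[R]_(n, #|J|) :=
  \matrix_(i, k) (i == enum_val k)%:R.

Variables (n : nat) (J : {set 'I_n}).
Local Notation E := (coord_embed J).

Lemma mulmx_coord_embed m (A : 'M[R]_(m, n)) i k : (A *m E) i k = A i (enum_val k).
Proof.
rewrite mxE (bigD1 (enum_val k)) //= big1 ?addr0 => [|j /negPf jk].
  by rewrite !mxE eqxx mulr1.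
by rewrite !mxE jk mulr0.
Qed.

Lemma tr_coord_embed_mulmx m (A : 'M[R]_(n, m)) k j : (E^T *m A) k j = A (enum_val k) j.
Proof. by rewrite -[_ *m A]trmxK trmx_mul trmxK mxE mulmx_coord_embed mxE. Qed.

Lemma vrestrE x : vrestr J x = E^T *m x.
Proof. by apply/matrixP => k j; rewrite (ord1 j) tr_coord_embed_mulmx mxE. Qed.

Lemma msubE (M : 'M[R]_n) : msub J M = E^T *m M *m E.
Proof. by apply/matrixP => k l; rewrite mulmx_coord_embed tr_coord_embed_mulmx mxE. Qed.

Lemma coord_embedK : E^T *m E = 1%:M.
Proof.
by apply/matrixP => k l; rewrite mulmx_coord_embed !mxE (inj_eq enum_val_inj) eq_sym.
Qed.

Lemma coord_span_embed v : in_coord_span J (E *m v).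
Proof.
move=> i iJ; rewrite mxE big1 // => k _; rewrite mxE.
have -> : (i == enum_val k) = false by apply: contraNF iJ => /eqP ->; exact: enum_valP.
by rewrite mul0r.
Qed.

Lemma coord_embed_restr x : in_coord_span J x -> E *m vrestr J x = x.
Proof.
move=> xJ; apply/matrixP => i j; rewrite (ord1 j) mxE.
under eq_bigr => k _ do rewrite !mxE.
rewrite -(big_enum_val (fun k => (i == k)%:R * x k 0)) /=.
have [iJ|iJ] := boolP (i \in J).
  rewrite (bigD1 i) //= eqxx mul1r big1 ?addr0 // => k /andP[_ ki].
  by rewrite eq_sym (negPf ki) mul0r.
rewrite xJ // big1 // => k kJ.
have -> : (i == k) = false by apply: contraNF iJ => /eqP ->.
by rewrite mul0r.
Qed.

Lemma dot_coord_embed v : dot (E *m v) (E *m v) = dot v v.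
Proof. by rewrite dot_mulmxr mulmxA coord_embedK mul1mx. Qed.

Lemma vnorm_coord_embed v : vnorm (E *m v) = vnorm v.
Proof. by rewrite !vnormE dot_coord_embed. Qed.

Lemma dot_coord_span_setC (x y : 'cV[R]_n) :
  in_coord_span J x -> in_coord_span (~: J) y -> dot x y = 0.
Proof.
move=> xJ yJc; rewrite dotE big1 // => i _.
have [iJ|iJ] := boolP (i \in J); last by rewrite xJ ?mul0r.
by rewrite yJc ?mulr0 // inE iJ.
Qed.

End Coordinates.

Section RangeOnCoordinates.
Variables (R : realType) (n : nat) (M : 'M[R]_n) (J : {set 'I_n}).
Hypotheses (symM : Defs.symmetric M)
  (rangeM : forall x : 'cV[R]_n, in_range M x <-> in_coord_span J x).
Local Notation E := (coord_embed R J).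
Local Notation A := (msub J M).

Lemma mulmx_coord_span_setC (z : 'cV[R]_n) : in_coord_span (~: J) z -> M *m z = 0.
Proof.
move=> zJc; apply: dotxx_eq0; rewrite -{1}symM -dot_mulmxr dotC.
by apply: dot_coord_span_setC zJc; apply/rangeM; exists (M *m z).
Qed.

Lemma coord_embed_restr_mulmx (y : 'cV[R]_n) : E *m (E^T *m (M *m y)) = M *m y.
Proof. by rewrite -vrestrE coord_embed_restr //; apply/rangeM; exists y. Qed.

Lemma msub_mulmxE m (c : 'M[R]_(#|J|, m)) : E^T *m (M *m (E *m c)) = A *m c.
Proof. by rewrite msubE -!mulmxA. Qed.

Lemma msub_unitmx : A \in unitmx.
Proof.
have Ainj (c : 'cV[R]_#|J|) : A *m c = 0 -> c = 0.
  move=> Ac0; have MEc0 : M *m (E *m c) = 0.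
    by rewrite -coord_embed_restr_mulmx msub_mulmxE Ac0 mulmx0.
  have [y Ec] : in_range M (E *m c) by apply/rangeM; apply: coord_span_embed.
  have Ec0 : E *m c = 0.
    by apply: dotxx_eq0; rewrite {2}Ec dot_mulmxr symM MEc0 dotC dot0r.
  by rewrite -[c]mul1mx -(coord_embedK R J) -mulmxA Ec0 mulmx0.
have symA : A^T = A by rewrite msubE !trmx_mul trmxK symM mulmxA.
rewrite -row_free_unit; apply: inj_row_free => v vA0.
by apply: trmx_inj; rewrite trmx0; apply: Ainj; rewrite -symA -trmx_mul vA0 trmx0.
Qed.

Definition range_preimage (x : 'cV[R]_n) : 'cV[R]_n := E *m (invmx A *m vrestr J x).

Lemma mulmx_range_preimage (x : 'cV[R]_n) :
  in_coord_span J x -> M *m range_preimage x = x.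
Proof.
move=> xJ; rewrite -coord_embed_restr_mulmx msub_mulmxE [A *m _]mulmxA.
by rewrite mulmxV ?msub_unitmx // mul1mx coord_embed_restr.
Qed.

Lemma qform_range_preimage (x : 'cV[R]_n) : in_coord_span J x ->
  qform M (range_preimage x) = qform (invmx A) (vrestr J x).
Proof.
move=> xJ; rewrite qformE mulmx_range_preimage // dotC dot_mulmxr -vrestrE.
by rewrite qformE.
Qed.

Lemma vnorm_range_preimage_le (x : 'cV[R]_n) : in_coord_span J x ->
  vnorm (range_preimage x) <= opnorm (invmx A) * vnorm x.
Proof.
move=> xJ; rewrite vnorm_coord_embed -{2}(coord_embed_restr xJ) vnorm_coord_embed.
exact: vnorm_mulmx_le.
Qed.

End RangeOnCoordinates.

Theorem lemmaE8 (R : realType) (l : nat) (M Xi : 'M[R]_l) (J : {set 'I_l}) :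
  psd M -> psd Xi ->
  (forall x : 'cV[R]_l, in_range M x <-> in_coord_span J x) ->
  opnorm Xi <= lambda_min (msub J M) / 2 ->
  M + Xi \in unitmx ->
  (forall x : 'cV[R]_l, in_range M x ->
     `| qform (invmx (M + Xi)) x - qform (invmx (msub J M)) (vrestr J x) |
       <= 2 * opnorm (invmx (msub J M)) ^+ 2 * opnorm Xi * vnorm x ^+ 2) /\
  (forall x : 'cV[R]_l, ~ in_range M x ->
     qform (invmx (M + Xi)) x >= (2 * opnorm Xi)^-1 * vnorm (vrestr (~: J) x) ^+ 2).
Proof.
move=> Mpsd Xipsd rangeM _ MXiu; have symM := proj1 Mpsd.
split=> [x /rangeM xJ | x _].
  set w := range_preimage M J x.
  have := qform_invmx_perturb Mpsd Xipsd MXiu w.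
  rewrite mulmx_range_preimage // qform_range_preimage // => /andP[lo hi].
  have Xiw : qform Xi w <= opnorm Xi * (opnorm (invmx (msub J M)) * vnorm x) ^+ 2.
    apply: le_trans (qform_le_opnorm _ _) _; rewrite ler_wpM2l ?opnorm_ge0 //.
    rewrite ler_sqr ?nnegrE ?vnorm_ge0 ?mulr_ge0 ?opnorm_ge0 ?vnorm_ge0 //.
    exact: vnorm_range_preimage_le.
  have := sqr_ge0 (opnorm (invmx (msub J M)) * vnorm x); have := opnorm_ge0 Xi.
  rewrite ler0_norm ?subr_le0 // exprMn in Xiw *; nra.
set v := vrestr (~: J) x; set z := coord_embed R (~: J) *m v.
have Mz0 : M *m z = 0.
  by apply: (mulmx_coord_span_setC symM rangeM); apply: coord_span_embed.
have := qform_invmx_ker_ge Mpsd Xipsd MXiu x Mz0.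
rewrite dot_mulmxr -vrestrE -/v dot_coord_embed -vnorm_sqr.
apply: le_trans; rewrite invfM -mulrA.
have : 0 <= (opnorm Xi)^-1 * vnorm v ^+ 2.
  by rewrite mulr_ge0 ?invr_ge0 ?opnorm_ge0 ?sqr_ge0.
lra.
Qed.
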